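(* Let $p\in(0,1)$ and let $g$ be a function with $g(n)\ge 2$. Any procedure that, for every source string $s\in\{0,1\}^n$, recovers the $g(n)$-subword deck of $s$ with high probability from independent traces of $s$ must use $\Omega(np(1-p))$ traces.
   Context: Deletion channel: for $s\in\{0,1\}^n$ and deletion probability $p$, a trace of $s$ is obtained by deleting each bit of $s$ independently with probability $p$; distinct traces are independent. The $k$-subword deck of $s$ is the multiset of length-$k$ substrings $\{s[i:i+k-1]: i=1,\dots,n-k+1\}$. *)

From mathcomp Require Import all_boot all_order all_algebra.
From mathcomp Require Import reals.
Set Implicit Arguments. Unset Strict Implicit. Unset Printing Implicit Defensive.
Import Order.TTheory GRing.Theory Num.Theory.
Local Open Scope ring_scope.

(* The k-subword deck of s: the list (to be compared up to permutation, i.e.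
   as a multiset) of the length-k substrings s[i : i+k-1], i = 1..n-k+1. *)
Definition deck (k : nat) (s : seq bool) : seq (seq bool) :=
  [seq take k (drop i s) | i <- iota 0 (size s - k).+1].

(* Probability (under the deletion channel with deletion prob. p) of a given
   retention pattern m : {ffun 'I_n -> bool} (true = bit kept). *)
Definition mask_prob (R : realType) (p : R) (n : nat) (m : {ffun 'I_n -> bool}) : R :=
  \prod_(i < n) (if m i then 1 - p else p).

Definition trace_of (n : nat) (s : n.-tuple bool) (m : {ffun 'I_n -> bool}) : seq bool :=
  mask [seq m i | i <- enum 'I_n] s.

Definition success_prob (R : realType) (p : R) (n T k : nat)
    (A : seq (seq bool) -> seq (seq bool)) (s : n.-tuple bool) : R :=
  \sum_(M : {ffun 'I_T -> {ffun 'I_n -> bool}})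
     (\prod_(j < T) mask_prob p (M j)) *
     (perm_eq (A [seq trace_of s (M j) | j <- enum 'I_T]) (deck k s))%:R.

From mathcomp Require Import all_boot all_order all_algebra.
From mathcomp Require Import reals.
From mathcomp Require Import ring lra zify.
Import Order.TTheory GRing.Theory Num.Theory.
Set Implicit Arguments. Unset Strict Implicit. Unset Printing Implicit Defensive.

(* Take a = n/2 (rounded down) and the block strings 0^a 1^(n-a) and
   0^(a+1) 1^(n-a-1). Their k-decks differ (the total number of ones over all
   windows drops), so a procedure recovering decks with probability 2/3 is a test
   telling T traces of one string from T traces of the other. A trace of 0^x 1^y
   is 0^X 1^Y with X ~ Bin(x, 1-p) and Y ~ Bin(y, 1-p) independent. Relative to the
   reference law Bin(a+1, 1-p) x Bin(n-a, 1-p), both trace laws have chi-square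
   moment (sum of v^2/w) at most 1 + 2(1-p)/(np), and for T independent traces the
   moment is raised to the power T. By Cauchy-Schwarz a test with error 1/3 then
   needs (1 + 2(1-p)/(np))^T >= 37/36, and Bernoulli's inequality gives
   T >= np/(74(1-p)) >= np(1-p)/74. *)

Definition zeros_ones (x y : nat) : seq bool := nseq x false ++ nseq y true.

Lemma count_take_zeros_ones j a b : count id (take j (zeros_ones a b)) = minn (j - a) b.
Proof.
rewrite /zeros_ones take_cat size_nseq; case: ltnP => ja.
  by rewrite take_nseq ?count_nseq /=; lia.
rewrite count_cat !count_nseq /= mul0n add0n.
case: (leqP (j - a) b) => jab.
  by rewrite take_nseq // count_nseq /=; lia.
by rewrite take_oversize ?size_nseq ?count_nseq /=; lia.
Qed.

Lemma ltn_sum_ord n (F G : 'I_n -> nat) i0 :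
  (forall i, F i <= G i) -> F i0 < G i0 -> \sum_i F i < \sum_i G i.
Proof.
move=> leFG ltFG0; rewrite (bigD1 i0) //= [X in _ < X](bigD1 i0) //= -addSn.
by rewrite leq_add // leq_sum.
Qed.

Lemma sum_count_deck_zeros_ones n k a : a <= n -> k <= n ->
  \sum_(w <- deck k (zeros_ones a (n - a))) count id w =
  \sum_(i < (n - k).+1) (minn (i + k - a) (n - a) - minn (i - a) (n - a)).
Proof.
move=> an kn; rewrite big_map size_cat !size_nseq subnKC //.
rewrite -[iota 0 _]/(index_iota 0 (n - k).+1) big_mkord; apply: eq_bigr => i _.
by rewrite -!count_take_zeros_ones takeD count_cat addKn.
Qed.

(* Turning the first 1 into a 0 lowers the number of ones in every window, and
   strictly in the windows covering it, so the total over the deck drops. *)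
Lemma deck_zeros_ones_neq n k a : 0 < k <= n -> a < n ->
  ~~ perm_eq (deck k (zeros_ones a (n - a))) (deck k (zeros_ones a.+1 (n - a.+1))).
Proof.
move=> /andP [k0 kn] an; apply/negP => /(perm_big _) ones_eq.
move: (ones_eq _ addn 0 predT (count id)).
rewrite !sum_count_deck_zeros_ones ?(ltnW an) // => /eqP; apply/negP.
rewrite neq_ltn; apply/orP; right.
by apply: (@ltn_sum_ord _ _ _ (inord (a.+1 - k))) => [i|]; rewrite ?inordK; lia.
Qed.

Lemma mask_nseq (T : Type) m k (x : T) :
  mask m (nseq k x) = nseq (count id (take k m)) x.
Proof. by elim: k m => [|k IH] [|[] m] //=; rewrite IH. Qed.

Lemma count_zeros_ones x y : count negb (zeros_ones x y) = x /\ count id (zeros_ones x y) = y.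
Proof. by rewrite !count_cat !count_nseq /= mul1n mul0n addn0 mul1n. Qed.

Lemma size_zeros_ones x y : size (zeros_ones x y) = x + y.
Proof. by rewrite size_cat !size_nseq. Qed.

Definition block_tuple n a (a_le_n : a <= n) : n.-tuple bool :=
  Tuple (introT eqP (etrans (size_zeros_ones a (n - a)) (subnKC a_le_n))).

Lemma trace_of_block_tuple n a (a_le_n : a <= n) (m : {ffun 'I_n -> bool}) :
  exists x y, [/\ trace_of (block_tuple a_le_n) m = zeros_ones x y, x <= a & y <= n - a].
Proof.
rewrite /trace_of /= /zeros_ones; set bits := [seq m i | i <- enum 'I_n].
have size_bits : size bits = n by rewrite size_map size_enum_ord.
rewrite -(cat_take_drop a bits) mask_cat ?size_takel ?size_bits ?size_nseq //.
rewrite !mask_nseq; do 2!eexists; split; first by [].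
  by rewrite (leq_trans (count_size _ _)) // size_take_min geq_minl.
by rewrite (leq_trans (count_size _ _)) // size_take_min geq_minl.
Qed.

Local Open Scope ring_scope.

Definition pushforward (R : nzSemiRingType) (O1 : finType) (O2 : eqType)
    (mu : O1 -> R) (f : O1 -> O2) (y : O2) : R :=
  \sum_x mu x * (f x == y)%:R.

Section ProductMeasures.
Variable R : comNzRingType.

Lemma sum_ffun_prod (I O : finType) (h : O -> R) :
  \sum_(t : {ffun I -> O}) \prod_j h (t j) = (\sum_x h x) ^+ #|I|.
Proof. by rewrite -prodr_const bigA_distr_bigA. Qed.

Lemma sum_ffun_prod_pushforward (I O1 O2 : finType) (mu : O1 -> R) (f : O1 -> O2)
    (F : {ffun I -> O2} -> R) :
  \sum_(M : {ffun I -> O1}) (\prod_j mu (M j)) * F [ffun j => f (M j)] =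
  \sum_(t : {ffun I -> O2}) (\prod_j pushforward mu f (t j)) * F t.
Proof.
under [RHS]eq_bigr => t _ do rewrite bigA_distr_bigA big_distrl /=.
rewrite exchange_big /=; apply: eq_bigr => M _.
rewrite (bigD1 [ffun j => f (M j)]) //= [X in _ + X]big1 ?addr0.
  by congr (_ * _); apply: eq_bigr => j _; rewrite ffunE eqxx mulr1.
move=> t /eqP neq_t; have [j fMj | fM] := pickP (fun j => f (M j) != t j).
  by rewrite (bigD1 j) //= (negbTE fMj) mulr0 !mul0r.
by case: neq_t; apply/ffunP => j; rewrite ffunE; move/negbFE/eqP: (fM j).
Qed.

Definition prod_pmf (O1 O2 : finType) (f : O1 -> R) (g : O2 -> R) (i : O1 * O2) : R :=
  f i.1 * g i.2.

Lemma sum_prod_pmf (O1 O2 : finType) (f : O1 -> R) (g : O2 -> R) :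
  \sum_i prod_pmf f g i = (\sum_x f x) * (\sum_y g y).
Proof.
rewrite -(pair_bigA _ (fun x y => f x * g y)) big_distrl.
by apply: eq_bigr => x _; rewrite big_distrr.
Qed.

End ProductMeasures.

Section ChiSquare.
Variable R : realFieldType.

(* Cauchy-Schwarz in L^2(w): expand 0 <= \sum_x w x ((v x - w x) / w x - B F x)^2
   with B the difference of expectations. *)
Lemma chi2_test_bound (O : finType) (v w F : O -> R) :
  (forall x, 0 < w x) -> \sum_x w x = 1 -> \sum_x v x = 1 ->
  (forall x, 0 <= F x <= 1) ->
  (\sum_x v x * F x - \sum_x w x * F x) ^+ 2 <= \sum_x v x ^+ 2 / w x - 1.
Proof.
move=> w_gt0 sum_w sum_v F01.
have w_neq0 x : w x != 0 by rewrite gt_eqF.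
have -> : \sum_x v x * F x - \sum_x w x * F x = \sum_x (v x - w x) * F x.
  by rewrite -sumrB; apply: eq_bigr => x _; rewrite mulrBl.
have -> : \sum_x v x ^+ 2 / w x - 1 = \sum_x (v x - w x) ^+ 2 / w x.
  have -> : \sum_x (v x - w x) ^+ 2 / w x = \sum_x (v x ^+ 2 / w x - 2 * v x + w x).
    by apply: eq_bigr => x _; have wx := w_neq0 x; field.
  by rewrite !big_split /= sumrN -mulr_sumr sum_v sum_w; ring.
set B := \sum_x (v x - w x) * F x; set X := \sum_x (v x - w x) ^+ 2 / w x.
set C := \sum_x w x * F x ^+ 2.
have C_le1 : C <= 1.
  rewrite -sum_w; apply: ler_sum => x _; have /andP [F0 F1] := F01 x.
  by rewrite -[leRHS]mulr1 (ler_wpM2l (ltW (w_gt0 x))) // exprn_ile1.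
have : 0 <= \sum_x w x * ((v x - w x) / w x - B * F x) ^+ 2.
  by apply: sumr_ge0 => x _; rewrite mulr_ge0 ?sqr_ge0 ?ltW.
have -> : \sum_x w x * ((v x - w x) / w x - B * F x) ^+ 2 =
    \sum_x ((v x - w x) ^+ 2 / w x - 2 * B * ((v x - w x) * F x) +
            B ^+ 2 * (w x * F x ^+ 2)).
  by apply: eq_bigr => x _; have wx := w_neq0 x; field.
rewrite !big_split /= sumrN -!mulr_sumr -/B -/X -/C; nra.
Qed.

Definition iid_expect (I O : finType) (v : O -> R) (F : {ffun I -> O} -> R) : R :=
  \sum_(t : {ffun I -> O}) (\prod_j v (t j)) * F t.

Lemma chi2_iid_test_bound (I O : finType) (v w : O -> R) (F : {ffun I -> O} -> R) :
  (forall x, 0 < w x) -> \sum_x w x = 1 -> \sum_x v x = 1 ->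
  (forall t, 0 <= F t <= 1) ->
  (iid_expect v F - iid_expect w F) ^+ 2 <= (\sum_x v x ^+ 2 / w x) ^+ #|I| - 1.
Proof.
move=> w_gt0 sum_w sum_v F01; rewrite -sum_ffun_prod.
under [X in _ <= X - 1]eq_bigr => t _ do rewrite big_split /= prodfV prodrXl.
apply: chi2_test_bound => // [t||]; first exact: prodr_gt0.
  by rewrite sum_ffun_prod sum_w expr1n.
by rewrite sum_ffun_prod sum_v expr1n.
Qed.

Lemma chi2_prod_pmf (O1 O2 : finType) (f1 f2 : O1 -> R) (g1 g2 : O2 -> R) :
  \sum_i prod_pmf f1 g1 i ^+ 2 / prod_pmf f2 g2 i =
  (\sum_x f1 x ^+ 2 / f2 x) * (\sum_y g1 y ^+ 2 / g2 y).
Proof.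
rewrite -sum_prod_pmf; apply: eq_bigr => i _.
by rewrite /prod_pmf exprMn invfM mulrACA.
Qed.

Lemma iid_expect_le_compl (I O : finType) (v : O -> R) (F G : {ffun I -> O} -> R) :
  (forall x, 0 <= v x) -> \sum_x v x = 1 -> (forall t, F t + G t <= 1) ->
  iid_expect v F <= 1 - iid_expect v G.
Proof.
move=> v_ge0 sum_v FG_le1; rewrite lerBrDr.
have <- : \sum_(t : {ffun I -> O}) \prod_j v (t j) = 1 by rewrite sum_ffun_prod sum_v expr1n.
rewrite /iid_expect -big_split; apply: ler_sum => t _ /=.
by rewrite -mulrDr -[leRHS]mulr1 ler_wpM2l // prodr_ge0.
Qed.

Lemma bernoulli_ineq (x : R) T : 0 <= x -> (1 + x) ^+ T * (1 - T%:R * x) <= 1.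
Proof.
move=> x_ge0; elim: T => [|T IH]; first by rewrite expr0 mul0r subr0 mulr1.
have pow_ge0 : 0 <= (1 + x) ^+ T by rewrite exprn_ge0 // addr_ge0.
rewrite exprSr -mulrA; apply: le_trans IH; rewrite ler_wpM2l // -natr1.
have := mulr_ge0 (mulr_ge0 x_ge0 x_ge0) (ler0n R T); nra.
Qed.

(* Le Cam's two-point method: the mean of a test separating v1^I from v2^I by 1/3
   is 1/6-far under one of them from its mean under w^I; then apply
   [chi2_iid_test_bound] and Bernoulli's inequality. *)
Lemma two_point_test_bound (I O : finType) (v1 v2 w : O -> R)
    (F : {ffun I -> O} -> R) (e : R) :
  (forall x, 0 < w x) -> \sum_x w x = 1 -> \sum_x v1 x = 1 -> \sum_x v2 x = 1 ->
  (forall t, 0 <= F t <= 1) ->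
  \sum_x v1 x ^+ 2 / w x <= 1 + e -> \sum_x v2 x ^+ 2 / w x <= 1 + e ->
  2 / 3 <= iid_expect v1 F -> iid_expect v2 F <= 1 / 3 ->
  1 <= 37 * #|I|%:R * e.
Proof.
move=> w_gt0 sum_w sum_v1 sum_v2 F01 chi1 chi2 succ1 fail2.
have chi_ge0 (v : O -> R) : 0 <= \sum_x v x ^+ 2 / w x.
  by apply: sumr_ge0 => x _; rewrite divr_ge0 ?sqr_ge0 ?ltW.
have ratio_le_min0 : 0 <= e.
  have := chi2_test_bound (F := fun=> 0) w_gt0 sum_w sum_v1.
  under eq_bigr do rewrite mulr0; under [X in _ - X]eq_bigr do rewrite mulr0.
  rewrite !big1_eq subrr expr0n /= lexx ler01 => /(_ (fun=> isT)) ?; lra.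
have chiX (v : O -> R) : \sum_x v x ^+ 2 / w x <= 1 + e ->
    (\sum_x v x ^+ 2 / w x) ^+ #|I| - 1 <= (1 + e) ^+ #|I| - 1.
  by move=> chi_le; rewrite lerB // lerXn2r ?nnegrE ?chi_ge0 // addr_ge0.
have E_ge : 37 / 36 <= (1 + e) ^+ #|I|.
  have /le_trans/(_ (chiX _ chi1)) := chi2_iid_test_bound w_gt0 sum_w sum_v1 F01.
  have /le_trans/(_ (chiX _ chi2)) := chi2_iid_test_bound w_gt0 sum_w sum_v2 F01.
  have gap : 1 / 3 <= (iid_expect v1 F - iid_expect w F) - (iid_expect v2 F - iid_expect w F).
    lra.
  move: gap; set x := _ - iid_expect w F; set y := _ - iid_expect w F.
  move=> gap Dy Dx; have := sqr_ge0 (x + y); nra.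
have := bernoulli_ineq #|I| ratio_le_min0; nra.
Qed.

End ChiSquare.


Section Binomial.
Variables (R : realFieldType) (p : R).

(* The binomial law Bin(N, 1 - p): [p] is the deletion probability. *)
Definition bin_pmf N x : R := 'C(N, x)%:R * (1 - p) ^+ x * p ^+ (N - x).

Lemma bin_pmf0n x : bin_pmf 0 x = (x == 0)%:R.
Proof. by case: x => [|x]; rewrite /bin_pmf ?bin0 ?bin0n /=; ring. Qed.

Lemma bin_pmfS0 N : bin_pmf N.+1 0 = p * bin_pmf N 0.
Proof. by rewrite /bin_pmf !bin0 !subn0 exprS; ring. Qed.

Lemma bin_pmfSS N x : bin_pmf N.+1 x.+1 = p * bin_pmf N x.+1 + (1 - p) * bin_pmf N x.
Proof.
rewrite /bin_pmf binS natrD subSS; have [lt_xN|le_Nx] := ltnP x N.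
  by rewrite -(subnSK lt_xN) !exprS; ring.
by rewrite (bin_small (n := N)) ?ltnS // exprS; ring.
Qed.

Lemma bin_pmf_small N x : (N < x)%N -> bin_pmf N x = 0.
Proof. by move=> lt_Nx; rewrite /bin_pmf bin_small // !mul0r. Qed.

Lemma sum_bin_pmf N K : (N < K)%N -> \sum_(x < K) bin_pmf N x = 1.
Proof.
elim: K => // K IH; rewrite ltnS leq_eqVlt => /orP [/eqP <- | lt_NK].
  have : (p + (1 - p)) ^+ N = 1 by rewrite addrC subrK expr1n.
  by rewrite exprDn => <-; apply: eq_bigr => i _; rewrite /bin_pmf -mulr_natl; ring.
by rewrite big_ord_recr /= IH // bin_pmf_small // addr0.
Qed.

Lemma bin_pmf_mul_subn N x :
  bin_pmf N.+1 x * (N.+1 - x)%:R = N.+1%:R * p * bin_pmf N x.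
Proof.
have [le_xN|lt_Nx] := leqP x N; last first.
  by rewrite (eqnP lt_Nx) mulr0n mulr0 bin_pmf_small // mulr0.
have := congr1 (fun k => k%:R : R) (mul_bin_down N.+1 x).
rewrite /= !natrM /bin_pmf (subSn le_xN) exprS => bin_down.
transitivity ((N - x).+1%:R * 'C(N.+1, x)%:R * (1 - p) ^+ x * p ^+ (N - x) * p).
  by ring.
by rewrite -bin_down; ring.
Qed.

Lemma sum_bin_pmf_mul_subn N K : (N < K)%N ->
  \sum_(x < K) bin_pmf N x * (N - x)%:R = N%:R * p.
Proof.
case: N => [|N] lt_NK; first by rewrite big1 ?mul0r // => x _; rewrite sub0n mulr0.
under eq_bigr => x _ do rewrite bin_pmf_mul_subn.
by rewrite -mulr_sumr sum_bin_pmf ?mulr1 // ltnW.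
Qed.

Lemma sum_bin_pmf_sqr_div N K : (N < K)%N ->
  \sum_(x < K) bin_pmf N x ^+ 2 / bin_pmf N x = 1.
Proof.
move=> lt_NK; rewrite -(sum_bin_pmf lt_NK); apply: eq_bigr => x _.
by have [->|pmf_neq0] := eqVneq (bin_pmf N x) 0; rewrite expr2 ?mul0r ?mulfK.
Qed.

Hypothesis p01 : 0 < p < 1.

Lemma bin_pmf_ge0 N x : 0 <= bin_pmf N x.
Proof.
by case/andP: p01 => p0 p1; rewrite !mulr_ge0 ?exprn_ge0 ?ler0n ?subr_ge0 ?ltW.
Qed.

Lemma bin_pmf_gt0 N x : (x <= N)%N -> 0 < bin_pmf N x.
Proof.
move=> le_xN; case/andP: p01 => p0 p1.
by rewrite !mulr_gt0 ?exprn_gt0 ?ltr0n ?bin_gt0 ?subr_gt0.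
Qed.

Lemma chi2_bin_pmf N K : (N.+1 < K)%N ->
  \sum_(x < K) bin_pmf N x ^+ 2 / bin_pmf N.+1 x = 1 + (1 - p) / (N.+1%:R * p).
Proof.
move=> lt_NK; have [p0 _] := andP p01.
have Np_neq0 : N.+1%:R * p != 0 by rewrite mulf_neq0 ?pnatr_eq0 ?gt_eqF.
have N1_neq0 : 1 + N%:R != 0 :> R by rewrite addrC natr1 pnatr_eq0.
rewrite (eq_bigr (fun x : 'I_K => bin_pmf N x * (1 + (N - x)%:R) / (N.+1%:R * p)));
  last first.
  move=> x _; have [le_xN|lt_Nx] := leqP x N; last first.
    by rewrite bin_pmf_small // expr2 !mul0r.
  have pmfS_neq0 : bin_pmf N.+1 x != 0 by rewrite gt_eqF ?bin_pmf_gt0 ?leqW.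
  have subSn_nat : (N.+1 - x)%:R = 1 + (N - x)%:R :> R.
    by rewrite (subSn le_xN) -addn1 natrD addrC.
  have := bin_pmf_mul_subn N x; rewrite subSn_nat => pmf_eq.
  have pmfN : bin_pmf N x = bin_pmf N.+1 x * (1 + (N - x)%:R) / (N.+1%:R * p).
    by rewrite pmf_eq mulrC mulKf.
  rewrite expr2 {1}pmfN; field.
  by rewrite (gt_eqF p0) N1_neq0 pmfS_neq0.
rewrite -mulr_suml; under eq_bigr => x _ do rewrite mulrDr mulr1.
have lt_NK' := ltnW lt_NK.
rewrite big_split /= sum_bin_pmf // sum_bin_pmf_mul_subn //.
by rewrite -natr1; field; rewrite (gt_eqF p0) addrC.
Qed.

End Binomial.

Section DeletionChannel.
Variables (R : realType) (p : R).

Fixpoint trace_lik (s t : seq bool) : R :=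
  match s with
  | [::] => (t == [::])%:R
  | c :: s' => p * trace_lik s' t +
      (1 - p) * (if t is d :: t' then (d == c)%:R * trace_lik s' t' else 0)
  end.

Definition ffun_cons n (b : bool) (m : {ffun 'I_n -> bool}) : {ffun 'I_n.+1 -> bool} :=
  [ffun i => if unlift ord0 i is Some j then m j else b].

Lemma sum_ffun_cons n (F : {ffun 'I_n.+1 -> bool} -> R) :
  \sum_m F m = \sum_(b : bool) \sum_(m : {ffun 'I_n -> bool}) F (ffun_cons b m).
Proof.
rewrite pair_big /= (reindex (fun bm => ffun_cons bm.1 bm.2)) //=.
exists (fun m : {ffun 'I_n.+1 -> bool} => (m ord0, [ffun j => m (lift ord0 j)])).
  move=> [b m] _ /=; congr (_, _); first by rewrite ffunE unlift_none.
  by apply/ffunP => j; rewrite !ffunE liftK.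
move=> m _; apply/ffunP => i; rewrite ffunE.
by case: unliftP => [j ->|->]; rewrite ?ffunE.
Qed.

Lemma mask_prob_cons n b (m : {ffun 'I_n -> bool}) :
  mask_prob p (ffun_cons b m) = (if b then 1 - p else p) * mask_prob p m.
Proof.
rewrite /mask_prob big_ord_recl /= ffunE unlift_none; congr (_ * _).
by apply: eq_bigr => i _; rewrite ffunE liftK.
Qed.

Lemma trace_of_cons n (s : n.-tuple bool) c b (m : {ffun 'I_n -> bool}) :
  trace_of [tuple of c :: s] (ffun_cons b m) =
  if b then c :: trace_of s m else trace_of s m.
Proof.
rewrite /trace_of enum_ordSl /= ffunE unlift_none -map_comp.
rewrite (eq_map (g := fun i => m i)) => [|i /=]; last by rewrite ffunE liftK.
by case: b.
Qed.

Lemma trace_law n (s : n.-tuple bool) t :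
  pushforward (@mask_prob R p n) (trace_of s) t = trace_lik s t.
Proof.
rewrite /pushforward; elim: n s t => [|n IH] s t.
  rewrite tuple0 (eq_bigr (fun=> (t == [::])%:R)) => [|m _].
    by rewrite sumr_const card_ffun card_ord.
  rewrite /mask_prob big_ord0 mul1r /trace_of /=.
  by case: (map _ _); rewrite eq_sym.
case/tupleP: s => c s; rewrite sum_ffun_cons big_bool /=.
under eq_bigr => m _ do rewrite mask_prob_cons trace_of_cons -mulrA.
under [X in _ + X]eq_bigr => m _ do rewrite mask_prob_cons trace_of_cons -mulrA.
rewrite -!mulr_sumr IH addrC; congr (_ + _).
case: t => [|d t]; first by rewrite big1 ?mulr0 // => m _; rewrite mulr0.
congr (_ * _); under eq_bigr => m _ do rewrite eqseq_cons.
rewrite eq_sym; case: (d == c); last by rewrite mul0r big1 // => m _; rewrite mulr0.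
by rewrite mul1r IH.
Qed.

Lemma trace_lik_ones b x y :
  trace_lik (nseq b true) (zeros_ones x y) = bin_pmf p 0 x * bin_pmf p b y.
Proof.
rewrite /zeros_ones; elim: b x y => [|b IH] x y.
  rewrite /= !bin_pmf0n; case: x => [|x]; case: y => [|y] //=; rewrite ?mulr0 ?mul0r //.
  by rewrite /bin_pmf /= !mulr1.
case: x => [|x] /=; last by rewrite (IH x.+1 y) !bin_pmf0n /=; ring.
case: y => [|y] /=.
  by rewrite (IH 0 0) bin_pmfS0 mulr0 addr0; ring.
by rewrite (IH 0 y.+1) (IH 0 y) bin_pmfSS; ring.
Qed.

Lemma trace_lik_zeros_ones a b x y :
  trace_lik (zeros_ones a b) (zeros_ones x y) = bin_pmf p a x * bin_pmf p b y.
Proof.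
elim: a x y => [|a IH] x y; first exact: trace_lik_ones.
rewrite /zeros_ones in IH *.
case: x => [|x] /=; last by rewrite (IH x.+1 y) (IH x y) mul1r bin_pmfSS; ring.
case: y => [|y] /=.
  by rewrite (IH 0 0) bin_pmfS0 mulr0 addr0; ring.
by rewrite (IH 0 y.+1) bin_pmfS0; ring.
Qed.

End DeletionChannel.

Section BlockTraces.
Variables (K1 K2 : nat).

Definition pair_word (i : 'I_K1.+1 * 'I_K2.+1) : seq bool := zeros_ones i.1 i.2.

Definition word_pair (t : seq bool) : 'I_K1.+1 * 'I_K2.+1 :=
  (inord (count negb t), inord (count id t)).

Lemma pair_word_inj : injective pair_word.
Proof.
move=> [x1 y1] [x2 y2]; rewrite /pair_word /= => eq_w.
have [cx1 cy1] := count_zeros_ones x1 y1; have [cx2 cy2] := count_zeros_ones x2 y2.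
by rewrite eq_w in cx1 cy1; congr (_, _); apply: val_inj; rewrite /= -?cx1 -?cy1.
Qed.

Lemma word_pairK x y : (x <= K1)%N -> (y <= K2)%N ->
  pair_word (word_pair (zeros_ones x y)) = zeros_ones x y.
Proof.
move=> x_le y_le; rewrite /pair_word /word_pair /=.
by have [-> ->] := count_zeros_ones x y; rewrite !inordK.
Qed.

Lemma block_traceK n a (a_le_n : (a <= n)%N) m : (a <= K1)%N -> (n - a <= K2)%N ->
  pair_word (word_pair (trace_of (block_tuple a_le_n) m)) = trace_of (block_tuple a_le_n) m.
Proof.
move=> a_le n_a_le; have [x [y [-> x_le y_le]]] := trace_of_block_tuple a_le_n m.
by rewrite word_pairK ?(leq_trans x_le) ?(leq_trans y_le).
Qed.

Variables (R : realType) (p : R).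

Lemma block_trace_law n a (a_le_n : (a <= n)%N) i :
  (a <= K1)%N -> (n - a <= K2)%N ->
  pushforward (@mask_prob R p n) (word_pair \o trace_of (block_tuple a_le_n)) i =
  bin_pmf p a i.1 * bin_pmf p (n - a) i.2.
Proof.
move=> a_le n_a_le; rewrite -trace_lik_zeros_ones -(trace_law p (block_tuple a_le_n)).
apply: eq_bigr => m _; congr (_ * _%:R) => /=.
by rewrite -(inj_eq pair_word_inj) block_traceK.
Qed.

Lemma success_prob_block n a (a_le_n : (a <= n)%N) T k A :
  (a <= K1)%N -> (n - a <= K2)%N ->
  success_prob p T k A (block_tuple a_le_n) =
  iid_expect (prod_pmf (fun x : 'I_K1.+1 => bin_pmf p a x)
                       (fun y : 'I_K2.+1 => bin_pmf p (n - a) y))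
    (fun t : {ffun 'I_T -> 'I_K1.+1 * 'I_K2.+1} =>
       (perm_eq (A [seq pair_word (t j) | j <- enum 'I_T])
                (deck k (zeros_ones a (n - a))))%:R).
Proof.
move=> a_le n_a_le; rewrite /iid_expect.
under [RHS]eq_bigr => t _.
  rewrite (eq_bigr _ (fun j _ => esym (block_trace_law a_le_n (t j) a_le n_a_le))).
  over.
rewrite /success_prob -sum_ffun_prod_pushforward; apply: eq_bigr => M _.
congr (_ * _%:R); congr (perm_eq (A _) _).
by apply: eq_map => j; rewrite ffunE block_traceK.
Qed.

End BlockTraces.

Section LowerBound.
Variables (R : realType) (p : R).
Hypothesis p01 : 0 < p < 1.

(* Traces of both blocks are encoded in 'I_a.+2 * 'I_(n - a).+1, on which the
   reference law Bin(a+1) x Bin(n-a) has full support. *)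
Lemma deck_recovery_trace_bound n k a T A : (0 < k <= n)%N -> (a < n)%N ->
  (forall s : n.-tuple bool, 2 / 3 <= success_prob p T k A s) ->
  1 <= 37 * T%:R * ((1 - p) / ((minn a.+1 (n - a))%:R * p)).
Proof.
move=> k_gt0_le a_lt_n succ; have [p_gt0 p_lt1] := andP p01.
have n_a_eq : (n - a = (n - a.+1).+1)%N by rewrite subnSK.
pose bin2 x y := prod_pmf (fun i : 'I_a.+2 => bin_pmf p x i)
                          (fun i : 'I_(n - a).+1 => bin_pmf p y i).
pose test b (t : {ffun 'I_T -> 'I_a.+2 * 'I_(n - a).+1}) : R :=
  (perm_eq (A [seq pair_word (t j) | j <- enum 'I_T]) (deck k (zeros_ones b (n - b))))%:R.
have sum_bin2 x y : (x <= a.+1)%N -> (y <= n - a)%N -> \sum_i bin2 x y i = 1.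
  by move=> x_le y_le; rewrite sum_prod_pmf !sum_bin_pmf ?mulr1.
have ratio_le_min m : (minn a.+1 (n - a) <= m)%N ->
    (1 - p) / (m%:R * p) <= (1 - p) / ((minn a.+1 (n - a))%:R * p).
  have min_gt0 : (0 < minn a.+1 (n - a))%N by rewrite leq_min ltn0Sn subn_gt0.
  move=> min_le; apply: ler_wpM2l; first by rewrite subr_ge0 ltW.
  rewrite lef_pV2 ?posrE ?mulr_gt0 ?ltr0n ?(leq_trans min_gt0) //.
  by rewrite ler_pM2r // ler_nat.
rewrite -(card_ord T).
apply: (@two_point_test_bound _ 'I_T _ (bin2 a (n - a)%N) (bin2 a.+1 (n - a.+1)%N)
  (bin2 a.+1 (n - a)%N) (test a)).
- by move=> i; rewrite mulr_gt0 ?bin_pmf_gt0 // -ltnS.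
- by rewrite sum_bin2.
- by rewrite sum_bin2.
- by rewrite sum_bin2 // n_a_eq.
- by move=> t; rewrite /test; case: perm_eq; rewrite ?lexx ?ler01.
- rewrite chi2_prod_pmf chi2_bin_pmf // sum_bin_pmf_sqr_div // mulr1 lerD2l.
  by apply: ratio_le_min; rewrite geq_minl.
- rewrite chi2_prod_pmf sum_bin_pmf_sqr_div // mul1r n_a_eq chi2_bin_pmf // -n_a_eq lerD2l.
  by apply: ratio_le_min; rewrite geq_minr.
- have := succ (block_tuple (ltnW a_lt_n)).
  by rewrite (success_prob_block (K1 := a.+1) (K2 := (n - a)%N)) ?leqnSn.
apply: (@le_trans _ _ (1 - iid_expect (bin2 a.+1 (n - a.+1)%N) (test a.+1))).
  apply: iid_expect_le_compl => [i||t]; first by rewrite mulr_ge0 ?bin_pmf_ge0.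
    by rewrite sum_bin2 // n_a_eq.
  rewrite /test; case: (boolP (perm_eq _ _)) => [eq_a|_]; last first.
    by rewrite add0r; case: perm_eq; rewrite ?lexx ?ler01.
  by rewrite (permPl eq_a) (negbTE (deck_zeros_ones_neq k_gt0_le a_lt_n)) addr0.
have := succ (block_tuple a_lt_n).
by rewrite (success_prob_block (K1 := a.+1) (K2 := (n - a)%N)) ?leq_sub2l //; lra.
Qed.

End LowerBound.

Theorem theorem3 (R : realType) :
  exists c : R, 0 < c /\
    forall (p : R) (g : nat -> nat),
      0 < p < 1 ->
      (forall n, (2 <= g n)%N) ->
      forall (n T : nat) (A : seq (seq bool) -> seq (seq bool)),
        (g n <= n)%N ->
        (forall s : n.-tuple bool, 2 / 3 <= success_prob p T (g n) A s) ->
        c * n%:R * p * (1 - p) <= T%:R.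
Proof.
exists (1 / 74); split=> [|p g p01 g_ge2 n T A gn_le succ]; first by rewrite divr_gt0.
have [p_gt0 p_lt1] := andP p01.
have k_gt0_le : (0 < g n <= n)%N by rewrite gn_le (leq_trans _ (g_ge2 n)).
have a_lt_n : (n./2 < n)%N by lia.
have := deck_recovery_trace_bound p01 k_gt0_le a_lt_n succ.
set m := minn _ _; have m_gt0 : (0 < m)%N by rewrite leq_min ltn0Sn subn_gt0.
have n_le_2m : n%:R <= 2 * m%:R :> R by rewrite -natrM ler_nat; lia.
rewrite mulrA ler_pdivlMr ?mul1r ?mulr_gt0 ?ltr0n // => mp_le.
have np_le : n%:R * p <= 2 * (m%:R * p) by rewrite mulrA ler_wpM2r // ltW.
have npq_le : n%:R * p * (1 - p) <= n%:R * p.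
  by apply: ler_piMr; [rewrite mulr_ge0 ?ler0n ?ltW | lra].
have := mulr_ge0 (ler0n R T) (ltW p_gt0); lra.
Qed.
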